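(* There exist a unique length-preserving map $u\mapsto w_u$ from $\{0,1,2\}^*$ to $\{0,1\}^*$ and a unique map $u\mapsto s_u$ from $\{0,1,2\}^*$ to $\mathcal{S}$ such that for every $u\in\{0,1,2\}^*$: $w_u$ is a prefix of $w_{ua}$ for every $a\in\{0,1,2\}$, and $\mathrm{val}_{\mathcal{F}}(u)=\mathrm{val}_{\mathcal{F}}(w_us_u)$. Moreover, there is a unique map $\lambda:\{0,1,2\}^+\to\{0,1\}$, $v\mapsto\lambda_v$, such that $w_{ua}=w_u\lambda_{ua}$ for every $u\in\{0,1,2\}^*$ and $a\in\{0,1,2\}$.
   Context: Fibonacci numbers: $F_0=1$, $F_1=2$, $F_n=F_{n-1}+F_{n-2}$ for $n\ge2$. For a word $w=w_{k-1}\cdots w_0$ over $\{0,1,2\}$ (digits indexed from the right), $\mathrm{val}_{\mathcal{F}}(w)=\sum_{i=0}^{k-1}w_iF_i$. $\mathcal{S}=\{000,001,010,100,101\}$. *)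

From mathcomp Require Import all_boot.
Set Implicit Arguments. Unset Strict Implicit. Unset Printing Implicit Defensive.

Fixpoint fibF (n : nat) : nat :=
  match n with
  | 0 => 1
  | 1 => 2
  | (m.+1 as k).+1 => fibF k + fibF m
  end.

(* A word w = w_{k-1} ... w_0 is represented by the sequence
   [:: w_{k-1}; ...; w_0] (leftmost letter first); digits are indexed from
   the right, so digit w_i is  nth 0 (rev w) i. *)
Definition valF (w : seq nat) : nat :=
  \sum_(i < size w) nth 0 (rev w) i * fibF i.

Definition word3 := seq 'I_3.
Definition word2 := seq 'I_2.

Definition natw3 (u : word3) : seq nat := map (@nat_of_ord 3) u.
Definition natw2 (u : word2) : seq nat := map (@nat_of_ord 2) u.

Definition S_set : seq (seq nat) :=
  [:: [:: 0; 0; 0]; [:: 0; 0; 1]; [:: 0; 1; 0]; [:: 1; 0; 0]; [:: 1; 0; 1]].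

Definition good_pair (w : word3 -> word2) (s : word3 -> word2) : Prop :=
  forall u : word3,
    [/\ size (w u) = size u,
        natw2 (s u) \in S_set,
        (forall a : 'I_3, prefix (w u) (w (rcons u a)))
      & valF (natw3 u) = valF (natw2 (w u ++ s u))].

(* lambda : {0,1,2}^+ -> {0,1}, with w_{ua} = w_u lambda_{ua}.
   lambda is given as a total map on words; only its values on nonempty
   words matter. *)
Definition good_lambda (w : word3 -> word2) (lam : word3 -> 'I_2) : Prop :=
  forall (u : word3) (a : 'I_3), w (rcons u a) = rcons (w u) (lam (rcons u a)).

From mathcomp Require Import all_boot.
From mathcomp Require Import zify.
Set Implicit Arguments. Unset Strict Implicit.

(* Reading u letter by letter, a transducer with ten reachable states (r0, r1)
   outputs w_u and maintains
     val_F(u) = sum_i (w_u)_i F_{i+3} + r0   and   sum_i u_i F_{i+1} = sum_i (w_u)_i F_{i+4} + r1,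
   with r0 <= 4, so r0 is the value of a unique word s_u of S.  Conversely,
   for any pair (w, s) as in the statement, val_F(u) is the value of w_u in the
   base shifted by 3 plus a remainder <= 4; appending a letter appends one
   digit of weight F_3 = 5 to w_u, so that digit and the remainder are
   determined by val_F(ua), and uniqueness follows by induction on u. *)

Fixpoint fibsum (k : nat) (ds : seq nat) : nat :=
  if ds is d :: ds' then d * fibF k + fibsum k.+1 ds' else 0.

Definition valFk (k : nat) (x : seq nat) : nat := fibsum k (rev x).

Lemma fibsum_big k ds :
  \sum_(i < size ds) nth 0 ds i * fibF (i + k) = fibsum k ds.
Proof.
elim: ds k => [|d ds IH] k /=; first by rewrite big_ord0.
by rewrite big_ord_recl -IH; congr (_ + _); apply: eq_bigr => i _; rewrite addSnnS.
Qed.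

Lemma valF_valFk x : valF x = valFk 0 x.
Proof.
by rewrite /valF /valFk -fibsum_big size_rev; apply: eq_bigr => i _; rewrite addn0.
Qed.

Lemma valFk_SS k x : valFk k.+2 x = valFk k.+1 x + valFk k x.
Proof.
rewrite /valFk; elim: (rev x) k => [|d ds IH] k //=.
by rewrite IH; lia.
Qed.

Lemma valFk_rcons k x d : valFk k (rcons x d) = d * fibF k + valFk k.+1 x.
Proof. by rewrite /valFk rev_rcons. Qed.

Lemma valFk_cat k x y : valFk k (x ++ y) = valFk k y + valFk (size y + k) x.
Proof.
rewrite /valFk rev_cat -size_rev; elim: (rev y) k => [|d ds IH] k //=.
by rewrite IH addSnnS; lia.
Qed.

Lemma valF_cat3 x y : size y = 3 -> valF (x ++ y) = valFk 3 x + valF y.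
Proof. by move=> size_y; rewrite !valF_valFk valFk_cat size_y addnC. Qed.

Lemma S_set_small x : x \in S_set -> size x = 3 /\ valF x <= 4.
Proof.
have small : all (fun x => (size x == 3) && (valFk 0 x <= 4)) S_set by [].
by rewrite valF_valFk => /(allP small) /andP [/eqP].
Qed.

Lemma valF_S_inj : {in S_set &, injective valF}.
Proof.
have inj : all (fun x => all (fun y => (valFk 0 x == valFk 0 y) ==> (x == y)) S_set) S_set
  by [].
move=> x y /(allP inj) /allP x_inj /x_inj /implyP; rewrite !valF_valFk.
by move=> xy /eqP /xy /eqP.
Qed.

Lemma natw2_inj : injective natw2.
Proof. exact: inj_map val_inj. Qed.

Definition sword (d : nat) : word2 :=
  match d with
  | 0 => [:: ord0; ord0; ord0]
  | 1 => [:: ord0; ord0; ord_max]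
  | 2 => [:: ord0; ord_max; ord0]
  | 3 => [:: ord_max; ord0; ord0]
  | _ => [:: ord_max; ord0; ord_max]
  end.

Lemma sword_S d : d <= 4 -> natw2 (sword d) \in S_set /\ valF (natw2 (sword d)) = d.
Proof. by rewrite valF_valFk; case: d => [|[|[|[|[|]]]]]. Qed.

Definition bit (b : bool) : 'I_2 := @Ordinal 2 b (leq_b1 b).

Definition carry (st : nat * nat) (a : nat) : bool * (nat * nat) :=
  let l := 5 <= st.2 + a in (l, (st.2 + a - 5 * l, st.1 + st.2 + 2 * a - 8 * l)).

Lemma valFk_carry (x w : seq nat) (st : nat * nat) (a : nat) :
  8 * (carry st a).1 <= st.1 + st.2 + 2 * a ->
  valFk 0 x = valFk 3 w + st.1 -> valFk 1 x = valFk 4 w + st.2 ->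
  valFk 0 (rcons x a) = valFk 3 (rcons w (carry st a).1) + (carry st a).2.1 /\
  valFk 1 (rcons x a) = valFk 4 (rcons w (carry st a).1) + (carry st a).2.2.
Proof.
move=> no_underflow e0 e1; rewrite !valFk_rcons [valFk 2 x]valFk_SS [valFk 5 w]valFk_SS.
move: no_underflow; rewrite /carry /= e0 e1.
by case: (leqP 5 (st.2 + a)) => /= ?; split; lia.
Qed.

Definition reachable_states : seq (nat * nat) :=
  [:: (0, 0); (1, 2); (2, 4); (2, 3); (3, 5); (4, 7); (4, 6); (0, 1); (3, 6); (1, 1)].

Lemma carry_reachable st a : st \in reachable_states -> a < 3 ->
  (carry st a).2 \in reachable_states /\ 8 * (carry st a).1 <= st.1 + st.2 + 2 * a.
Proof.
have closed : all (fun st => all (fun a =>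
    ((carry st a).2 \in reachable_states) && (8 * (carry st a).1 <= st.1 + st.2 + 2 * a))
  (iota 0 3)) reachable_states by [].
move=> /(allP closed) /allP st_closed a_lt3.
by apply/andP/st_closed; rewrite mem_iota.
Qed.

Lemma reachable_rem_le4 st : st \in reachable_states -> st.1 <= 4.
Proof. by have /allP := (isT : all (fun st => st.1 <= 4) reachable_states); apply. Qed.

Definition transduce (u : word3) : word2 * (nat * nat) :=
  foldl (fun p (a : 'I_3) => let: (l, st) := carry p.2 a in (rcons p.1 (bit l), st))
    ([::], (0, 0)) u.

Lemma transduce_rcons (u : word3) (a : 'I_3) :
  transduce (rcons u a) =
  (rcons (transduce u).1 (bit (carry (transduce u).2 a).1), (carry (transduce u).2 a).2).
Proof. by rewrite /transduce foldl_rcons; case: carry. Qed.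

Lemma transduce_inv u :
  [/\ (transduce u).2 \in reachable_states, size (transduce u).1 = size u,
      valFk 0 (natw3 u) = valFk 3 (natw2 (transduce u).1) + (transduce u).2.1
    & valFk 1 (natw3 u) = valFk 4 (natw2 (transduce u).1) + (transduce u).2.2].
Proof.
elim/last_ind: u => [|u a [st_ok size_ok e0 e1]] //.
rewrite transduce_rcons /natw2 /natw3 !map_rcons !size_rcons size_ok /=.
have [st'_ok no_underflow] := carry_reachable st_ok (ltn_ord a).
by have [] := valFk_carry no_underflow e0 e1.
Qed.

Definition out_word (u : word3) : word2 := (transduce u).1.
Definition out_suffix (u : word3) : word2 := sword (transduce u).2.1.

Lemma good_pair_transduce : good_pair out_word out_suffix.
Proof.
move=> u; have [st_ok size_ok e0 _] := transduce_inv u.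
have [s_in_S val_s] := sword_S (reachable_rem_le4 st_ok).
have [size_s _] := S_set_small s_in_S.
split=> // [a|]; first by rewrite /out_word transduce_rcons prefix_rcons.
by rewrite /natw2 map_cat valF_cat3 ?val_s ?valF_valFk.
Qed.

Section GoodPair.

Variables (w s : word3 -> word2).
Hypothesis good : good_pair w s.

Lemma good_pair_rcons u a : exists l, w (rcons u a) = rcons (w u) l.
Proof.
have [+ _ _ _] := good (rcons u a).
have [size_u _ /(_ a) /prefixP [t ->] _] := good u.
rewrite size_cat size_rcons size_u -[(size u).+1]addn1 => /addnI.
by case: t => [|l [|]] // _; exists l; rewrite cats1.
Qed.

Lemma good_pair_valF u :
  valF (natw3 u) = valFk 3 (natw2 (w u)) + valF (natw2 (s u)) /\ valF (natw2 (s u)) <= 4.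
Proof.
have [_ s_in_S _ ->] := good u; have [size_s le4] := S_set_small s_in_S.
by rewrite /natw2 map_cat valF_cat3.
Qed.

Lemma good_pair_lambda : good_lambda w (fun v => last ord0 (w v)).
Proof. by move=> u a; have [l ->] := good_pair_rcons u a; rewrite last_rcons. Qed.

End GoodPair.

Lemma eq_mul5D l l' e e' : e <= 4 -> e' <= 4 -> l * 5 + e = l' * 5 + e' -> l = l'.
Proof. lia. Qed.

Lemma good_pair_unique w s w' s' :
  good_pair w s -> good_pair w' s' -> forall u, w u = w' u /\ s u = s' u.
Proof.
move=> good good'.
have s_eq u : w u = w' u -> s u = s' u.
  move=> w_eq; have [e le4] := good_pair_valF good u.
  have [e' le4'] := good_pair_valF good' u.
  have [_ inS _ _] := good u; have [_ inS' _ _] := good' u.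
  by apply/natw2_inj/valF_S_inj => //; move: e; rewrite e' w_eq => /addnI.
suff w_eq u : w u = w' u by move=> u; split; [|apply: s_eq]; apply: w_eq.
elim/last_ind: u => [|u a w_eq].
  have [/size0nil -> _ _ _] := good [::].
  by have [/size0nil -> _ _ _] := good' [::].
have [l wl] := good_pair_rcons good u a; have [l' wl'] := good_pair_rcons good' u a.
have [e le4] := good_pair_valF good (rcons u a).
have [e' le4'] := good_pair_valF good' (rcons u a).
(* the new digit has weight F_3 = 5 and the remainders are at most 4 *)
suff l_eq : l = l' by rewrite wl wl' w_eq l_eq.
apply/val_inj/(eq_mul5D le4 le4')/(@addIn (valFk 4 (natw2 (w u)))).
move: e e'; rewrite wl wl' -w_eq /natw2 !map_rcons !valFk_rcons -!/(natw2 _).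
by rewrite !(addnAC _ (valFk 4 _)) => eA eB; exact: etrans (esym eA) eB.
Qed.

Lemma good_lambda_last w lam u a :
  good_lambda w lam -> lam (rcons u a) = last ord0 (w (rcons u a)).
Proof. by move=> /(_ u a) ->; rewrite last_rcons. Qed.

Theorem proposition5p4 :
  exists (w : word3 -> word2) (s : word3 -> word2),
    [/\ good_pair w s,
        (forall w' s', good_pair w' s' -> forall u, w' u = w u /\ s' u = s u)
      & exists lam : word3 -> 'I_2,
          good_lambda w lam /\
          (forall lam', good_lambda w lam' ->
             forall v : word3, v != [::] -> lam' v = lam v)].
Proof.
exists out_word, out_suffix; split.
- exact: good_pair_transduce.
- by move=> w' s' good'; apply: good_pair_unique good' good_pair_transduce.
exists (fun v => last ord0 (out_word v)); split.
  exact: good_pair_lambda good_pair_transduce.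
move=> lam' good_lam; case/lastP => [|u a] // _.
exact: good_lambda_last good_lam.
Qed.
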